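(* For every term $t$ over $\Sigma_f(X)$, the equation $0\cdot t=0\cdot\sum_{x\in\mathsf{VAR}(t)}x$ is derivable in equational logic from $\mathsf{Md}_\bot$, where the empty sum is $0$.
   Context: $\Sigma_f$ is the signature with one sort, constants $0,1$, binary operations $+,\cdot$ and unary operation $-$; $\Sigma_{md,\bot}$ extends it with a constant $\bot$ and a unary operation $(\,\cdot\,)^{-1}$. $\Sigma_f(X)$ denotes terms over $\Sigma_f$ with variables from $X$, and $\mathsf{VAR}(t)$ is the set of variables occurring in $t$. $\mathsf{Md}_\bot$ is the set of $\Sigma_{md,\bot}$-equations (variables universally quantified): $(x+y)+z=x+(y+z)$; $x+y=y+x$; $x+0=x$; $x+(-x)=0\cdot x$; $(x\cdot y)\cdot z=x\cdot(y\cdot z)$; $x\cdot y=y\cdot x$; $1\cdot x=x$; $x\cdot(y+z)=x\cdot y+x\cdot z$; $-(-x)=x$; $0\cdot(x\cdot x)=0\cdot x$; $(x^{-1})^{-1}=x+0\cdot x^{-1}$; $x\cdot x^{-1}=1+0\cdot x^{-1}$; $(x\cdot y)^{-1}=x^{-1}\cdot y^{-1}$; $1^{-1}=1$; $0^{-1}=\bot$; $x+\bot=\bot$; $x\cdot\bot=\bot$. *)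

From mathcomp Require Import all_boot.
From Stdlib Require List.
Set Implicit Arguments. Unset Strict Implicit. Unset Printing Implicit Defensive.

Inductive term (X : Type) : Type :=
| Var : X -> term X
| Zero : term X
| One : term X
| Bot : term X
| Add : term X -> term X -> term X
| Mul : term X -> term X -> term X
| Opp : term X -> term X
| Inv : term X -> term X.

Arguments Zero {X}. Arguments One {X}. Arguments Bot {X}.

Fixpoint is_f_term (X : Type) (t : term X) : bool :=
  match t with
  | Var _ | Zero | One => true
  | Bot | Inv _ => false
  | Add a b | Mul a b => is_f_term a && is_f_term b
  | Opp a => is_f_term a
  end.

Fixpoint vars (X : Type) (t : term X) : seq X :=
  match t with
  | Var x => [:: x]
  | Zero | One | Bot => [::]
  | Add a b | Mul a b => vars a ++ vars b
  | Opp a | Inv a => vars a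
  end.

Definition VAR (X : eqType) (t : term X) : seq X := undup (vars t).

Fixpoint sum_vars (X : Type) (s : seq X) : term X :=
  match s with
  | [::] => Zero
  | [:: x] => Var x
  | x :: s' => Add (Var x) (sum_vars s')
  end.

Fixpoint subst (X Y : Type) (sigma : X -> term Y) (t : term X) : term Y :=
  match t with
  | Var x => sigma x
  | Zero => Zero
  | One => One
  | Bot => Bot
  | Add a b => Add (subst sigma a) (subst sigma b)
  | Mul a b => Mul (subst sigma a) (subst sigma b)
  | Opp a => Opp (subst sigma a)
  | Inv a => Inv (subst sigma a)
  end.

Definition vx : term nat := Var 0.
Definition vy : term nat := Var 1.
Definition vz : term nat := Var 2.

Definition Md_bot : seq (term nat * term nat) :=
  [:: (Add (Add vx vy) vz, Add vx (Add vy vz));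
      (Add vx vy, Add vy vx);
      (Add vx Zero, vx);
      (Add vx (Opp vx), Mul Zero vx);
      (Mul (Mul vx vy) vz, Mul vx (Mul vy vz));
      (Mul vx vy, Mul vy vx);
      (Mul One vx, vx);
      (Mul vx (Add vy vz), Add (Mul vx vy) (Mul vx vz));
      (Opp (Opp vx), vx);
      (Mul Zero (Mul vx vx), Mul Zero vx);
      (Inv (Inv vx), Add vx (Mul Zero (Inv vx)));
      (Mul vx (Inv vx), Add One (Mul Zero (Inv vx)));
      (Inv (Mul vx vy), Mul (Inv vx) (Inv vy));
      (Inv One, One);
      (Inv Zero, Bot);
      (Add vx Bot, Bot);
      (Mul vx Bot, Bot)].

Inductive derivable (E : seq (term nat * term nat)) (X : Type)
  : term X -> term X -> Prop :=
| d_refl t : derivable E t t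
| d_sym s t : derivable E s t -> derivable E t s
| d_trans s t u : derivable E s t -> derivable E t u -> derivable E s u
| d_ax (l r : term nat) (sigma : nat -> term X) :
    Stdlib.Lists.List.In (l, r) E -> derivable E (subst sigma l) (subst sigma r)
| d_add a a' b b' : derivable E a a' -> derivable E b b' ->
    derivable E (Add a b) (Add a' b')
| d_mul a a' b b' : derivable E a a' -> derivable E b b' ->
    derivable E (Mul a b) (Mul a' b')
| d_opp a a' : derivable E a a' -> derivable E (Opp a) (Opp a')
| d_inv a a' : derivable E a a' -> derivable E (Inv a) (Inv a').

From mathcomp Require Import all_boot.
From Stdlib Require Import Setoid Morphisms.

Set Implicit Arguments. Unset Strict Implicit.

(** The map [t |-> 0·t] sends [0] and [1] to [0], [-t] to [0·t], and both
    [a + b] and [a·b] to [0·a + 0·b]; hence [0·t] is the sum of [0·x] over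
    the variable occurrences [x] of [t].  Terms of the form [0·c] satisfy
    [0·c + 0·c = 0·c], so repeated occurrences can be dropped.  The
    multiplicative case is the only subtle one: [u := 0·a] and [v := 0·b]
    are idempotent for both operations, and [w := 0·(ab)] absorbs each of
    them additively, so expanding [(u + v)·(u + v) = u + v] yields
    [u + v = u + w + w + v = w]. *)

Local Notation "a ≈ b" := (derivable Md_bot a b) (at level 70).

Global Hint Resolve d_refl : core.

Section MdBotIdentities.
Variable X : Type.
Implicit Types a b c : term X.

Global Add Parametric Relation : (term X) (@derivable Md_bot X)
  reflexivity proved by (@d_refl Md_bot X)
  symmetry proved by (@d_sym Md_bot X)
  transitivity proved by (@d_trans Md_bot X) as derivable_rel.

Global Add Parametric Morphism : (@Add X) with signature
  (@derivable Md_bot X) ==> (@derivable Md_bot X) ==> (@derivable Md_bot X)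
  as Add_derivable.
Proof. by move=> *; apply: d_add. Qed.

Global Add Parametric Morphism : (@Mul X) with signature
  (@derivable Md_bot X) ==> (@derivable Md_bot X) ==> (@derivable Md_bot X)
  as Mul_derivable.
Proof. by move=> *; apply: d_mul. Qed.

Global Add Parametric Morphism : (@Opp X) with signature
  (@derivable Md_bot X) ==> (@derivable Md_bot X)
  as Opp_derivable.
Proof. by move=> *; apply: d_opp. Qed.

Definition subst3 a b c (n : nat) : term X :=
  match n with 0 => a | 1 => b | _ => c end.

Ltac axiom_instance l r a b c :=
  apply: (@d_ax Md_bot X l r (subst3 a b c)); rewrite /Md_bot /=; intuition.

Lemma addA a b c : Add (Add a b) c ≈ Add a (Add b c).
Proof. axiom_instance (Add (Add vx vy) vz) (Add vx (Add vy vz)) a b c. Qed.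

Lemma addC a b : Add a b ≈ Add b a.
Proof. axiom_instance (Add vx vy) (Add vy vx) a b a. Qed.

Lemma addx0 a : Add a Zero ≈ a.
Proof. axiom_instance (Add vx Zero) vx a a a. Qed.

Lemma addxN a : Add a (Opp a) ≈ Mul Zero a.
Proof. axiom_instance (Add vx (Opp vx)) (Mul Zero vx) a a a. Qed.

Lemma mulA a b c : Mul (Mul a b) c ≈ Mul a (Mul b c).
Proof. axiom_instance (Mul (Mul vx vy) vz) (Mul vx (Mul vy vz)) a b c. Qed.

Lemma mulC a b : Mul a b ≈ Mul b a.
Proof. axiom_instance (Mul vx vy) (Mul vy vx) a b a. Qed.

Lemma mul1x a : Mul One a ≈ a.
Proof. axiom_instance (Mul One vx) vx a a a. Qed.

Lemma mulxDr a b c : Mul a (Add b c) ≈ Add (Mul a b) (Mul a c).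
Proof. axiom_instance (Mul vx (Add vy vz)) (Add (Mul vx vy) (Mul vx vz)) a b c. Qed.

Lemma oppK a : Opp (Opp a) ≈ a.
Proof. axiom_instance (Opp (Opp vx)) vx a a a. Qed.

Lemma mul0_sqr a : Mul Zero (Mul a a) ≈ Mul Zero a.
Proof. axiom_instance (Mul Zero (Mul vx vx)) (Mul Zero vx) a a a. Qed.

Lemma add0x a : Add Zero a ≈ a.
Proof. by rewrite addC addx0. Qed.

Lemma mulx1 a : Mul a One ≈ a.
Proof. by rewrite mulC mul1x. Qed.

Lemma mul0N a : Mul Zero (Opp a) ≈ Mul Zero a.
Proof. by rewrite -(addxN (Opp a)) oppK addC addxN. Qed.

Lemma mul00 : Mul Zero Zero ≈ (Zero : term X).
Proof.
have addN1 : Add One (Opp One) ≈ (Zero : term X) by rewrite addxN mulx1.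
by rewrite -{2}addN1 mulxDr mul0N !mulx1 addx0.
Qed.

Lemma mul00x a : Mul Zero (Mul Zero a) ≈ Mul Zero a.
Proof. by rewrite -mulA mul00. Qed.

Lemma add_mul0_idem a : Add (Mul Zero a) (Mul Zero a) ≈ Mul Zero a.
Proof. by rewrite !(mulC Zero a) -mulxDr addx0. Qed.

Lemma mul0_mul0 a b : Mul (Mul Zero a) (Mul Zero b) ≈ Mul Zero (Mul a b).
Proof. by rewrite mulA -(mulA a) (mulC a Zero) mulA mul00x. Qed.

Lemma mul_mul0_idem a : Mul (Mul Zero a) (Mul Zero a) ≈ Mul Zero a.
Proof. by rewrite mul0_mul0 mul0_sqr. Qed.

Lemma add_mul0M_absorb a b :
  Add (Mul Zero (Mul a b)) (Mul Zero a) ≈ Mul Zero (Mul a b).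
Proof.
have -> : Mul Zero (Mul a b) ≈ Mul a (Mul Zero b)
  by rewrite -mulA (mulC Zero a) mulA.
by rewrite (mulC Zero a) -mulxDr addx0.
Qed.

Lemma mul0D a b : Mul Zero (Add a b) ≈ Add (Mul Zero a) (Mul Zero b).
Proof. exact: mulxDr. Qed.

Lemma mul0M a b : Mul Zero (Mul a b) ≈ Add (Mul Zero a) (Mul Zero b).
Proof.
set u := Mul Zero a; set v := Mul Zero b; set w := Mul Zero (Mul a b).
have wu : Add w u ≈ w by exact: add_mul0M_absorb.
have wv : Add w v ≈ w by rewrite /w (mulC a b); exact: add_mul0M_absorb.
have uv_idem : Mul (Add u v) (Add u v) ≈ Add u v
  by rewrite -mul0D mul_mul0_idem.
rewrite -uv_idem mulxDr !(mulC (Add u v)) !mulxDr !mul_mul0_idem.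
rewrite (mulC v u) mul0_mul0 -/w (addC u w) wu wv.
symmetry; exact: add_mul0_idem.
Qed.

End MdBotIdentities.

Lemma sum_vars_cons (X : Type) (x : X) (s : seq X) :
  sum_vars (x :: s) ≈ Add (Var x) (sum_vars s).
Proof. by case: s => [|y s] //=; rewrite addx0. Qed.

Lemma mul0_sum_vars_cat (X : Type) (s1 s2 : seq X) :
  Mul Zero (sum_vars (s1 ++ s2))
    ≈ Add (Mul Zero (sum_vars s1)) (Mul Zero (sum_vars s2)).
Proof.
elim: s1 => [|x s1 IH]; first by rewrite /= mul00 add0x.
by rewrite cat_cons !sum_vars_cons !mulxDr IH addA.
Qed.

Lemma add_mul0_sum_vars_absorb (X : eqType) (x : X) (s : seq X) : x \in s ->
  Add (Mul Zero (Var x)) (Mul Zero (sum_vars s)) ≈ Mul Zero (sum_vars s).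
Proof.
elim: s => [|y s IH] //; rewrite inE sum_vars_cons mulxDr.
case/orP => [/eqP -> | /IH xs]; first by rewrite -addA add_mul0_idem.
by rewrite -addA (addC (Mul Zero (Var x))) addA xs.
Qed.

Lemma mul0_sum_vars_undup (X : eqType) (s : seq X) :
  Mul Zero (sum_vars s) ≈ Mul Zero (sum_vars (undup s)).
Proof.
elim: s => [|x s IH] //.
rewrite [undup _]/=; case: ifP => xs; first by rewrite sum_vars_cons mulxDr add_mul0_sum_vars_absorb.
by rewrite !sum_vars_cons !mulxDr IH.
Qed.

Lemma mul0_sum_vars (X : Type) (t : term X) : is_f_term t ->
  Mul Zero t ≈ Mul Zero (sum_vars (vars t)).
Proof.
elim: t => //= [|a IHa b IHb|a IHa b IHb|a IHa].
- by rewrite mulx1 mul00.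
- by case/andP => fa fb; rewrite mul0_sum_vars_cat mul0D IHa // IHb.
- by case/andP => fa fb; rewrite mul0_sum_vars_cat mul0M IHa // IHb.
- by move=> fa; rewrite mul0N IHa.
Qed.

Theorem proposition2p4 (X : eqType) (t : term X) :
  is_f_term t ->
  derivable Md_bot (Mul Zero t) (Mul Zero (sum_vars (VAR t))).
Proof.
move=> ft; rewrite /VAR -mul0_sum_vars_undup.
exact: mul0_sum_vars.
Qed.
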